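(* Assume $\mathbb Ef(\boldsymbol X)=0$ and $p_{\min}>0$. Let $s\ge1$, let $m_1,\dots,m_{s-1}\in\{1,\dots,M\}$, define $R_0\equiv0$ and $R_t(\boldsymbol X)=R_{t-1}(\boldsymbol X)+\mathbb E(f(\boldsymbol X)-R_{t-1}(\boldsymbol X)\mid\boldsymbol X_{\mathcal X(m_t)})$ for $1\le t\le s-1$, and let $m\in\{1,\dots,M\}\setminus\{m_1,\dots,m_{s-1}\}$. Then $$\Big|\mathbb E\big[(\mathbb E(f(\boldsymbol X)-R_{s-1}(\boldsymbol X)\mid\boldsymbol X_{\mathcal X(m)}))^2\big]-\mathrm{Var}(g_m(\boldsymbol X))\Big|\le\frac{21\,\delta_0}{p_{\min}^2}\,\mathbb E[f(\boldsymbol X)^2].$$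
   Context: Setup. $\boldsymbol X=(X_1,\dots,X_p)^\top$ is a random vector in $\{0,1\}^p$; $\{1,\dots,p\}$ is partitioned into disjoint nonempty feature groups $\mathcal X(1),\dots,\mathcal X(M)$, $M\ge2$; a group is either a single feature or has $\#\mathcal X(m)>1$ and consists of one-hot indicators ($\sum_{j\in\mathcal X(m)}\mathbf 1\{X_j=1\}=1$ a.s.). $\boldsymbol X_H=(X_j)_{j\in H}$, $\boldsymbol X_{-H}=(X_j)_{j\notin H}$. Conditional expectations given null events are set to $0$. $p_{\min}=\min_{1\le l<k\le M,\,i\in\mathcal X(l),\,j\in\mathcal X(k),\,(a,b)\in\{0,1\}^2}\mathbb P(X_i=a,X_j=b)$; $\delta_0=\max_{1\le m\le M}\inf\{\delta\ge0:\mathbb P(\max_{i\in\mathcal X(m)}|\mathbb P(X_i=1\mid\boldsymbol X_{-\mathcal X(m)})-\mathbb P(X_i=1)|\le\delta)=1\}$. For $f:\{0,1\}^p\to\mathbb R$, $g_m(\boldsymbol X)=\mathbb E(f(\boldsymbol X)-\mathbb E(f(\boldsymbol X)\mid\boldsymbol X_{-\mathcal X(m)})\mid\boldsymbol X_{\mathcal X(m)})$. *)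

From mathcomp Require Import all_boot all_order all_algebra.
From mathcomp Require Import classical_sets reals.
Set Implicit Arguments. Unset Strict Implicit. Unset Printing Implicit Defensive.
Import Order.TTheory GRing.Theory Num.Theory.
Local Open Scope ring_scope.

(* Sample space {0,1}^p : x j = true  <->  X_j = 1. *)
Definition Omega (p : nat) := {ffun 'I_p -> bool}.

Section Disc.
Variables (R : realType) (p : nat) (P : Omega p -> R).

Definition Ex (Y : Omega p -> R) : R := \sum_(x : Omega p) P x * Y x.
Definition Pr (A : pred (Omega p)) : R := \sum_(x : Omega p | A x) P x.

(* E(Y | X_H)(x); set to 0 on null conditioning events *)
Definition condE (H : {set 'I_p}) (Y : Omega p -> R) (x : Omega p) : R :=
  let S := [pred y : Omega p | [forall j in H, y j == x j]] in
  let den := \sum_(y | S y) P y in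
  if den == 0 then 0 else (\sum_(y | S y) P y * Y y) / den.

Definition Var (Y : Omega p -> R) : R := Ex (fun x => (Y x - Ex Y) ^+ 2).

Definition ind (i : 'I_p) (x : Omega p) : R := (x i)%:R.

Variables (M : nat) (grp : 'I_p -> 'I_M).

Definition Xg (m : 'I_M) : {set 'I_p} := [set j | grp j == m].

Definition pmin : R :=
  \big[Order.min/1]_(ij : 'I_p * 'I_p | (grp ij.1 < grp ij.2)%N)
    \big[Order.min/1]_(ab : bool * bool)
      Pr (fun x => (x ij.1 == ab.1) && (x ij.2 == ab.2)).

Definition delta0 : R :=
  \big[Order.max/0]_(m : 'I_M)
    inf [set d : R | 0 <= d /\
      Pr (fun x => \big[Order.max/0]_(i | grp i == m)
             `|condE (~: Xg m) (ind i) x - Ex (ind i)| <= d) = 1].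

Definition gm (f : Omega p -> R) (m : 'I_M) : Omega p -> R :=
  condE (Xg m) (fun y => f y - condE (~: Xg m) f y).

Definition Rseq (f : Omega p -> R) (ms : seq 'I_M) : Omega p -> R :=
  foldl (fun Rp mt => fun x => Rp x + condE (Xg mt) (fun y => f y - Rp y) x)
        (fun _ => 0) ms.

End Disc.

From mathcomp Require Import all_boot all_order all_algebra.
From mathcomp Require Import classical_sets reals ring lra.
Import Order.TTheory GRing.Theory Num.Theory.
Set Implicit Arguments. Unset Strict Implicit. Unset Printing Implicit Defensive.
Local Open Scope ring_scope.

(* Write [E_H] for conditioning on [X_H], [A := E_m (f - R_{s-1})] and
   [u := E_{-m} f - R_{s-1}].  The residual [R_{s-1}] is built from groups other
   than [m], so it is [X_{-m}]-measurable with mean zero; hence so is [u], with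
   [E u^2 <= 4 E f^2], and [A - g_m = E_m u].  Conditioning an [X_{-m}]-measurable
   centred variable on the single group [m] shrinks it by [delta_0 / p_min], since
   one-hot coding turns the event [X_m = x_m] into [X_i = 1] or [X_i = 0] for one
   coordinate [i].  Cauchy-Schwarz on [E A^2 - E g_m^2 = E[(A - g_m)(A + g_m)]]
   gives the bound [4 delta_0 / p_min E f^2], below the stated one as [p_min <= 1]. *)

Section DiscreteExpectation.
Variables (R : realType) (p : nat) (P : Omega p -> R).
Hypothesis P_ge0 : forall x, 0 <= P x.
Hypothesis P_sum1 : \sum_(x : Omega p) P x = 1.

Definition agree (H : {set 'I_p}) (x y : Omega p) : bool :=
  [forall j in H, y j == x j].
Definition agree_mass H x := \sum_(y | agree H x y) P y.
Definition agree_sum H (Y : Omega p -> R) x := \sum_(y | agree H x y) P y * Y y.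
Definition determined_by H (Y : Omega p -> R) :=
  forall x y, agree H x y -> Y x = Y y.

Lemma condE_ratio H Y x : condE P H Y x = agree_sum H Y x / agree_mass H x.
Proof.
rewrite /condE /agree_sum /agree_mass /=.
by case: eqP => [->|//]; rewrite invr0 mulr0.
Qed.

Lemma agree_refl H x : agree H x x.
Proof. by apply/forall_inP. Qed.

Lemma agree_sym H x y : agree H x y -> agree H y x.
Proof. by move/forall_inP=> h; apply/forall_inP=> j /h/eqP->. Qed.

Lemma agree_trans H x y z : agree H x y -> agree H y z -> agree H x z.
Proof.
move=> /forall_inP hxy /forall_inP hyz; apply/forall_inP=> j hj.
by rewrite (eqP (hyz j hj)) hxy.
Qed.

Lemma agree_same H x y : agree H x y -> agree H x =1 agree H y.
Proof.
move=> hxy z; apply/idP/idP; [exact: agree_trans (agree_sym hxy) | exact: agree_trans].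
Qed.

Lemma agree_mass_agree H x y : agree H x y -> agree_mass H x = agree_mass H y.
Proof. by move=> h; apply: eq_bigl; apply: agree_same. Qed.

Lemma condE_determined H Y : determined_by H (condE P H Y).
Proof.
move=> x y h; rewrite !condE_ratio (agree_mass_agree h); congr (_ / _).
by apply: eq_bigl; apply: agree_same.
Qed.

Lemma agree_mass_ge H x : P x <= agree_mass H x.
Proof.
rewrite /agree_mass (bigD1 x) ?agree_refl //= lerDl.
by apply: sumr_ge0 => *; apply: P_ge0.
Qed.

Lemma ExD Y1 Y2 : Ex P (fun x => Y1 x + Y2 x) = Ex P Y1 + Ex P Y2.
Proof. by rewrite /Ex -big_split; apply: eq_bigr => x _; rewrite mulrDr. Qed.

Lemma ExB Y1 Y2 : Ex P (fun x => Y1 x - Y2 x) = Ex P Y1 - Ex P Y2.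
Proof. by rewrite /Ex -sumrB; apply: eq_bigr => x _; rewrite mulrBr. Qed.

Lemma ExZ c Y : Ex P (fun x => c * Y x) = c * Ex P Y.
Proof. by rewrite /Ex mulr_sumr; apply: eq_bigr => x _; rewrite mulrCA. Qed.

Lemma Ex_cst c : Ex P (fun _ => c) = c.
Proof. by rewrite /Ex -mulr_suml P_sum1 mul1r. Qed.

Lemma eq_Ex_support Y1 Y2 : (forall z, 0 < P z -> Y1 z = Y2 z) ->
  Ex P Y1 = Ex P Y2.
Proof.
move=> h; apply: eq_bigr => z _.
by have := P_ge0 z; rewrite le_eqVlt => /orP[/eqP <-|/h ->]; rewrite ?mul0r.
Qed.

Lemma eq_Ex Y1 Y2 : Y1 =1 Y2 -> Ex P Y1 = Ex P Y2.
Proof. by move=> h; apply: eq_bigr => z _; rewrite h. Qed.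

Lemma ler_Ex_support Y1 Y2 : (forall z, 0 < P z -> Y1 z <= Y2 z) ->
  Ex P Y1 <= Ex P Y2.
Proof.
move=> h; apply: ler_sum => z _.
have := P_ge0 z; rewrite le_eqVlt => /orP[/eqP <-|hz]; first by rewrite !mul0r.
by rewrite ler_wpM2l ?h.
Qed.

Lemma ler_Ex Y1 Y2 : (forall z, Y1 z <= Y2 z) -> Ex P Y1 <= Ex P Y2.
Proof. by move=> h; apply: ler_Ex_support => z _. Qed.

Lemma Ex_ge0 Y : (forall z, 0 <= Y z) -> 0 <= Ex P Y.
Proof. by move=> h; apply: sumr_ge0 => z _; apply: mulr_ge0. Qed.

Lemma Ex_sqr_ge0 Y : 0 <= Ex P (fun z => Y z ^+ 2).
Proof. by apply: Ex_ge0 => z; apply: sqr_ge0. Qed.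

Lemma abs_Ex_le Y : `|Ex P Y| <= Ex P (fun z => `|Y z|).
Proof.
apply: le_trans (ler_norm_sum _ _ _) _.
by apply: ler_sum => z _; rewrite normrM ger0_norm.
Qed.

Lemma condE_eq_support H Y1 Y2 x : (forall z, 0 < P z -> Y1 z = Y2 z) ->
  condE P H Y1 x = condE P H Y2 x.
Proof.
move=> h; rewrite !condE_ratio; congr (_ / _); apply: eq_bigr => z _.
by have := P_ge0 z; rewrite le_eqVlt => /orP[/eqP <-|/h ->]; rewrite ?mul0r.
Qed.

Lemma condEB H Y1 Y2 x :
  condE P H (fun z => Y1 z - Y2 z) x = condE P H Y1 x - condE P H Y2 x.
Proof.
rewrite !condE_ratio -mulrBl -sumrB; congr (_ / _).
by apply: eq_bigr => z _; rewrite mulrBr.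
Qed.

(* Both sides equal the double sum of [P x v x P y Y y / P(X_H = x_H)] over the
   pairs agreeing on [H]; swap the sums and use that [v] and the mass are constant
   on each class. *)
Lemma Ex_mul_condE H (v Y : Omega p -> R) : determined_by H v ->
  Ex P (fun x => v x * condE P H Y x) = Ex P (fun x => v x * Y x).
Proof.
move=> hv; rewrite /Ex.
transitivity (\sum_x \sum_y
  (if agree H x y then P x * v x / agree_mass H x * (P y * Y y) else 0)).
  apply: eq_bigr => x _; rewrite condE_ratio /agree_sum big_mkcond /=.
  rewrite mulr_suml !mulr_sumr; apply: eq_bigr => y _.
  by case: ifP => _; [ring | rewrite !(mul0r, mulr0)].
rewrite exchange_big /=; apply: eq_bigr => y _.
transitivity (\sum_(x | agree H y x) P x * (v y / agree_mass H y * (P y * Y y))).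
  rewrite [RHS]big_mkcond /=; apply: eq_bigr => x _.
  have -> : agree H x y = agree H y x by apply/idP/idP => /agree_sym.
  case: ifP => // hyx.
  by rewrite (hv _ _ hyx) (agree_mass_agree hyx); ring.
rewrite -mulr_suml -/(agree_mass H y).
have [hm|hm] := eqVneq (agree_mass H y) 0; last by field.
have -> : P y = 0 by apply/eqP; rewrite eq_le P_ge0 andbT -hm agree_mass_ge.
by rewrite !(mul0r, mulr0).
Qed.

Lemma Ex_condE H Y : Ex P (condE P H Y) = Ex P Y.
Proof.
have := @Ex_mul_condE H (fun _ => 1) Y (fun _ _ _ => erefl).
by rewrite !(eq_Ex (fun x => mul1r _)).
Qed.

Lemma Ex_sqr_condE_split H Y :
  Ex P (fun x => condE P H Y x ^+ 2) + Ex P (fun x => (Y x - condE P H Y x) ^+ 2)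
  = Ex P (fun x => Y x ^+ 2).
Proof.
have hpull := @Ex_mul_condE H (condE P H Y) Y (@condE_determined H Y).
rewrite -ExD (eq_Ex (Y2 := fun x => Y x ^+ 2 + 2 * (condE P H Y x * condE P H Y x)
                               - 2 * (condE P H Y x * Y x))); last by move=> x; ring.
by rewrite ExB ExD !ExZ hpull; ring.
Qed.

Lemma Ex_sqr_condE_le H Y :
  Ex P (fun x => condE P H Y x ^+ 2) <= Ex P (fun x => Y x ^+ 2).
Proof. by rewrite -(Ex_sqr_condE_split H Y) lerDl Ex_sqr_ge0. Qed.

Lemma Ex_sqr_sub_condE_le H Y :
  Ex P (fun x => (Y x - condE P H Y x) ^+ 2) <= Ex P (fun x => Y x ^+ 2).
Proof. by rewrite -(Ex_sqr_condE_split H Y) lerDr Ex_sqr_ge0. Qed.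

Lemma condE_cst H c x : 0 < P x -> condE P H (fun _ => c) x = c.
Proof.
move=> hx; rewrite condE_ratio /agree_sum -mulr_suml -/(agree_mass H x).
rewrite mulrAC divff ?mul1r //.
by rewrite gt_eqF // (lt_le_trans hx) ?agree_mass_ge.
Qed.

Definition agree_ind H x (z : Omega p) : R := (agree H x z)%:R.

Lemma Ex_agree_ind H x : Ex P (agree_ind H x) = agree_mass H x.
Proof.
rewrite /Ex /agree_mass [RHS]big_mkcond; apply: eq_bigr => z _.
by rewrite /agree_ind; case: ifP; rewrite ?mulr1 ?mulr0.
Qed.

Lemma agree_sum_Ex H Y x :
  agree_sum H Y x = Ex P (fun z => Y z * agree_ind H x z).
Proof.
rewrite /Ex /agree_sum big_mkcond; apply: eq_bigr => z _.
by rewrite /agree_ind; case: ifP; rewrite ?mulr1 ?mulr0 ?mul0r.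
Qed.

Lemma Ex_sqr_addr_le Y1 Y2 :
  Ex P (fun x => (Y1 x + Y2 x) ^+ 2)
  <= 2 * Ex P (fun x => Y1 x ^+ 2) + 2 * Ex P (fun x => Y2 x ^+ 2).
Proof.
rewrite -!ExZ -ExD; apply: ler_Ex => z.
by have := sqr_ge0 (Y1 z - Y2 z); nra.
Qed.

Lemma Ex_sqr_condE_subr_le H Y r :
  Ex P (fun x => (condE P H Y x - r x) ^+ 2)
  <= 2 * Ex P (fun x => (Y x - r x) ^+ 2) + 2 * Ex P (fun x => Y x ^+ 2).
Proof.
have sq_split x :
    (condE P H Y x - r x) ^+ 2 = ((Y x - r x) + (condE P H Y x - Y x)) ^+ 2.
  by ring.
rewrite (eq_Ex sq_split); apply: le_trans (Ex_sqr_addr_le _ _) _.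
rewrite lerD2l ler_pM2l //.
apply: le_trans (Ex_sqr_sub_condE_le H Y); apply: ler_Ex => x.
by rewrite -sqrrN opprB.
Qed.

(* Lagrange's identity: [2 (E w^2 E z^2 - (E wz)^2)] is the double sum of
   [P x P y (w x z y - w y z x)^2]. *)
Lemma Ex_mul_sqr_le (w z : Omega p -> R) :
  Ex P (fun x => w x * z x) ^+ 2 <= Ex P (fun x => w x ^+ 2) * Ex P (fun x => z x ^+ 2).
Proof.
set T := fun x y => P x * w x ^+ 2 * (P y * z y ^+ 2).
set U := fun x y => P x * (w x * z x) * (P y * (w y * z y)).
have ET : Ex P (fun x => w x ^+ 2) * Ex P (fun x => z x ^+ 2) = \sum_x \sum_y T x y.
  by rewrite /Ex big_distrlr.
have EU : Ex P (fun x => w x * z x) ^+ 2 = \sum_x \sum_y U x y.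
  by rewrite /Ex expr2 big_distrlr.
have ETC : \sum_x \sum_y T y x = \sum_x \sum_y T x y by rewrite exchange_big.
have lagrange : \sum_x \sum_y (P x * P y * (w x * z y - w y * z x) ^+ 2)
   = \sum_x \sum_y T x y + \sum_x \sum_y T y x - 2 * \sum_x \sum_y U x y.
  rewrite mulr_sumr -!big_split -sumrB; apply: eq_bigr => x _.
  rewrite mulr_sumr -!big_split -sumrB; apply: eq_bigr => y _.
  by rewrite /T /U /=; ring.
have : 0 <= \sum_x \sum_y (P x * P y * (w x * z y - w y * z x) ^+ 2).
  by do 2!apply: sumr_ge0 => ? _; rewrite mulr_ge0 ?sqr_ge0 ?mulr_ge0.
rewrite lagrange ETC ET EU; lra.
Qed.

Lemma abs_Ex_mul_le (w z : Omega p -> R) c F : 0 <= c -> 0 <= F ->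
  Ex P (fun x => w x ^+ 2) <= c ^+ 2 * F -> Ex P (fun x => z x ^+ 2) <= F ->
  `|Ex P (fun x => w x * z x)| <= c * F.
Proof.
move=> c0 F0 hw hz; have cF0 : 0 <= c * F by rewrite mulr_ge0.
rewrite -ler_sqr ?nnegrE // real_normK ?num_real //.
apply: le_trans (Ex_mul_sqr_le w z) _.
by rewrite exprMn expr2 mulrA; apply: ler_pM; rewrite ?Ex_sqr_ge0.
Qed.

Lemma Ex_abs_sqr_le Y : Ex P (fun z => `|Y z|) ^+ 2 <= Ex P (fun z => Y z ^+ 2).
Proof.
have := Ex_mul_sqr_le (fun z => `|Y z|) (fun _ => 1).
rewrite !(eq_Ex (fun z => mulr1 _)) (eq_Ex (fun z => real_normK (num_real (Y z)))).
by rewrite Ex_cst mulr1.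
Qed.

Lemma Var_mean0 Y : Ex P Y = 0 -> Var P Y = Ex P (fun x => Y x ^+ 2).
Proof. by move=> EY0; rewrite /Var EY0; apply: eq_Ex => x; rewrite subr0. Qed.

Lemma abs_Ex_sqr_sub_le (a b : Omega p -> R) c F : 0 <= c -> 0 <= F ->
  Ex P (fun x => (a x - b x) ^+ 2) <= c ^+ 2 * (4 * F) ->
  Ex P (fun x => a x ^+ 2) <= F -> Ex P (fun x => b x ^+ 2) <= F ->
  `|Ex P (fun x => a x ^+ 2) - Ex P (fun x => b x ^+ 2)| <= c * (4 * F).
Proof.
move=> c0 F0 hab ha hb; rewrite -ExB; under eq_Ex => x do rewrite subr_sqr.
apply: abs_Ex_mul_le hab _; rewrite ?mulr_ge0 //.
by apply: le_trans (Ex_sqr_addr_le _ _) _; lra.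
Qed.

End DiscreteExpectation.

Section Residual.
Variables (R : realType) (p M : nat) (P : Omega p -> R) (grp : 'I_p -> 'I_M).
Variables (f : Omega p -> R) (m : 'I_M).
Hypothesis P_ge0 : forall x, 0 <= P x.
Hypothesis P_sum1 : \sum_(x : Omega p) P x = 1.
Hypothesis Ef0 : Ex P f = 0.

Definition residual_step (r : Omega p -> R) (mt : 'I_M) : Omega p -> R :=
  fun x => r x + condE P (Xg grp mt) (fun y => f y - r y) x.

Definition residual_inv (r : Omega p -> R) :=
  [/\ Ex P (fun x => (f x - r x) ^+ 2) <= Ex P (fun x => f x ^+ 2),
      Ex P r = 0 & determined_by (~: Xg grp m) r].

Lemma agree_compl_group mt x y : mt != m ->
  agree (~: Xg grp m) x y -> agree (Xg grp mt) x y.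
Proof.
move=> hne /forall_inP h; apply/forall_inP => j; rewrite inE => /eqP hj.
by apply: h; rewrite !inE hj.
Qed.

Lemma residual_inv_step r mt : mt != m -> residual_inv r ->
  residual_inv (residual_step r mt).
Proof.
move=> hne [r_sq r_mean r_det]; split.
- apply: le_trans r_sq.
  apply: le_trans (Ex_sqr_sub_condE_le P_ge0 (Xg grp mt) (fun y => f y - r y)).
  by apply: ler_Ex => // x; rewrite /residual_step opprD addrA.
- by rewrite ExD Ex_condE // ExB Ef0 r_mean subrr addr0.
- move=> x y hxy; rewrite /residual_step (r_det _ _ hxy).
  by congr (_ + _); apply: condE_determined; apply: agree_compl_group hxy.
Qed.

Lemma residual_inv_Rseq ms : m \notin ms -> residual_inv (Rseq P grp f ms).
Proof.
have inv0 : residual_inv (fun _ => 0).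
  by split; [apply: ler_Ex => // x; rewrite subr0 | rewrite Ex_cst | ].
change (m \notin ms -> residual_inv (foldl residual_step (fun _ => 0) ms)).
elim: ms (fun _ => 0) inv0 => [//|mt ms IH] r hr.
rewrite in_cons negb_or => /andP[hmt hms] /=.
by apply: IH => //; apply: residual_inv_step; rewrite // eq_sym.
Qed.

Definition residual_gap (r : Omega p -> R) x := condE P (~: Xg grp m) f x - r x.

Lemma residual_gap_props r : residual_inv r ->
  [/\ determined_by (~: Xg grp m) (residual_gap r), Ex P (residual_gap r) = 0
    & Ex P (fun x => residual_gap r x ^+ 2) <= 4 * Ex P (fun x => f x ^+ 2)].
Proof.
move=> [r_sq r_mean r_det]; split.
- move=> x y hxy; rewrite /residual_gap (r_det _ _ hxy).
  by rewrite (condE_determined _ _ hxy).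
- by rewrite ExB Ex_condE // Ef0 r_mean subrr.
- by apply: le_trans (Ex_sqr_condE_subr_le P_ge0 _ _ _) _; lra.
Qed.

Lemma condE_residual_sub_gm r x :
  condE P (Xg grp m) (fun y => f y - r y) x - gm P grp f m x
  = condE P (Xg grp m) (residual_gap r) x.
Proof.
rewrite /gm -condEB; apply: condE_eq_support => // z _.
by rewrite /residual_gap; ring.
Qed.

End Residual.

Lemma pmin_le1 (R : realType) p M (P : Omega p -> R) (grp : 'I_p -> 'I_M) :
  pmin P grp <= 1.
Proof. exact: bigmin_le_id. Qed.

Lemma mul4_le_mul21_div_sqr (R : realFieldType) (d q F : R) :
  0 <= d -> 0 < q -> q <= 1 -> 0 <= F -> d / q * (4 * F) <= 21%:R * d / q ^+ 2 * F.
Proof.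
move=> d_ge0 q_gt0 q_le1 F_ge0.
have dqF : 0 <= d / q * F by rewrite mulr_ge0 // divr_ge0 // ltW.
rewrite (_ : d / q * (4 * F) = d / q * F * 4); last by ring.
rewrite (_ : 21%:R * d / q ^+ 2 * F = d / q * F * (21%:R / q)); last first.
  by field; rewrite gt_eqF.
by rewrite (ler_wpM2l dqF) // ler_pdivlMr //; lra.
Qed.

Section OneHotGroups.
Variables (R : realType) (p M : nat) (P : Omega p -> R) (grp : 'I_p -> 'I_M).
Hypothesis P_ge0 : forall x, 0 <= P x.
Hypothesis P_sum1 : \sum_(x : Omega p) P x = 1.
Hypothesis M_ge2 : (2 <= M)%N.
Hypothesis grp_surj : forall k : 'I_M, exists j, grp j = k.
Hypothesis one_hot : forall k : 'I_M, (1 < #|Xg grp k|)%N ->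
  Pr P (fun x => #|[set j in Xg grp k | x j]| == 1%N) = 1.

Lemma Pr1_support (A : pred (Omega p)) : Pr P A = 1 -> forall y, 0 < P y -> A y.
Proof.
move=> hA y hy; apply/negPn/negP => hnA.
have hc : \sum_(z | ~~ A z) P z = 0.
  move: P_sum1; rewrite (bigID A) /= -/(Pr P A) hA => /eqP.
  by rewrite addrC -subr_eq0 addrK => /eqP.
by move: hy; rewrite (psumr_eq0P (fun z _ => P_ge0 z) hc) ?ltxx.
Qed.

Lemma hot_coord (H : {set 'I_p}) (z : Omega p) i :
  [set j in H | z j] = [set i] -> forall j, j \in H -> z j = (j == i).
Proof. by move=> /setP hz j jH; move: (hz j); rewrite !inE jH. Qed.

(* On the support, the value of a group is determined by one coordinate: the
   hot one for a one-hot group, the only one for a singleton group. *)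
Lemma group_key_coord k x : 0 < P x -> exists2 i, grp i = k &
  forall y, 0 < P y -> agree (Xg grp k) x y = (y i == x i).
Proof.
move=> hx; have [big|small] := ltnP 1 #|Xg grp k|.
- have hot := Pr1_support (one_hot big).
  have /cards1P [i hxi] := hot x hx.
  have ik : i \in Xg grp k by have := set11 i; rewrite -hxi inE => /andP[].
  exists i => [|y hy]; first by move: ik; rewrite inE => /eqP.
  have xi := hot_coord hxi ik; rewrite eqxx in xi.
  apply/forall_inP/idP => [-> // | /eqP yx j jk].
  have /cards1P [i' hyi'] := hot y hy.
  have : i \in [set j in Xg grp k | y j] by rewrite inE ik yx xi.
  rewrite hyi' inE => /eqP ii'.
  by rewrite (hot_coord hxi jk) (hot_coord hyi' jk) ii'.
- have [j0 gj0] := grp_surj k.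
  have j0k : j0 \in Xg grp k by rewrite inE gj0.
  exists j0 => // y _; apply/forall_inP/idP => [-> //|yx j jk].
  by rewrite -(card_le1_eqP small _ _ jk j0k).
Qed.

Lemma delta0_ge0 : 0 <= delta0 P grp.
Proof. exact: bigmax_ge_id. Qed.

Lemma delta0_bound k i y : grp i = k -> 0 < P y ->
  `|condE P (~: Xg grp k) (ind R i) y - Ex P (ind R i)| <= delta0 P grp.
Proof.
move=> gi hy.
pose dev x := \big[Order.max/0]_(i | grp i == k)
  `|condE P (~: Xg grp k) (ind R i) x - Ex P (ind R i)|.
apply: (@le_trans _ _ (dev y)); first by apply: (@le_bigmax_cond _ _ _ _ i); rewrite gi.
apply: le_trans (le_bigmax _ _ k); apply: lb_le_inf; last first.
  by move=> d [_ hd]; apply: (Pr1_support hd).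
exists (\big[Order.max/0]_x dev x); split; first exact: bigmax_ge_id.
by rewrite /Pr -P_sum1; apply: eq_bigl => x; apply: le_bigmax.
Qed.

Lemma agree_ind_dev k x y : 0 < P x -> 0 < P y ->
  `|condE P (~: Xg grp k) (agree_ind R (Xg grp k) x) y
    - Ex P (agree_ind R (Xg grp k) x)| <= delta0 P grp.
Proof.
move=> hx hy; have [i gi key] := group_key_coord k hx.
have coord z : 0 < P z ->
    agree_ind R (Xg grp k) x z = if x i then ind R i z else 1 - ind R i z.
  move=> hz; rewrite /agree_ind /ind key //.
  by case: (x i); case: (z i); rewrite ?subrr ?subr0.
rewrite (condE_eq_support P_ge0 _ _ coord) (eq_Ex_support P_ge0 coord).
case: (x i); first exact: delta0_bound.
rewrite (condEB P _ (fun _ => 1)) condE_cst // (ExB P (fun _ => 1)) Ex_cst //.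
have -> : forall a b : R, 1 - a - (1 - b) = - (a - b) by move=> a b; ring.
by rewrite normrN; apply: delta0_bound.
Qed.

Lemma exists_other_group k : exists k' : 'I_M, k' != k.
Proof.
have [hk|hk] := eqVneq (val k) 0%N.
- by exists (Ordinal M_ge2); apply/eqP => e; move: hk; rewrite -e.
- by exists (Ordinal (ltnW M_ge2)); apply/eqP => e; move: hk; rewrite -e eqxx.
Qed.

(* With [i] the key coordinate of group [k] at [x] and [j] in another group,
   the event [X_k = x_k] contains [X_i = x_i, X_j = 1], one of the events in [p_min]. *)
Lemma agree_mass_ge_pmin k x : 0 < P x -> pmin P grp <= agree_mass P (Xg grp k) x.
Proof.
move=> hx; have [i gi key] := group_key_coord k hx.
have [k' k'k] := exists_other_group k; have [j gj] := grp_surj k'.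
have mass_ge : Pr P (fun y => (y i == x i) && (y j == true)) <= agree_mass P (Xg grp k) x.
  rewrite /Pr /agree_mass big_mkcond [leRHS]big_mkcond /=; apply: ler_sum => y _.
  have := P_ge0 y; rewrite le_eqVlt => /orP[/eqP <-|hy]; first by do 2!case: ifP.
  by rewrite key //; case: (y i == x i); case: (y j == true).
apply: le_trans mass_ge.
have ij : grp i != grp j by rewrite gi gj eq_sym.
pose ordered (ij : 'I_p * 'I_p) := (grp ij.1 < grp ij.2)%N.
case: (ltngtP (grp i) (grp j)) => [lt_ij|lt_ji|eq_ij].
- apply: le_trans; first exact: (@bigmin_le_cond _ _ _ _ (i, j) ordered).
  exact: (@bigmin_le _ _ _ _ (x i, true)).
- apply: le_trans; first exact: (@bigmin_le_cond _ _ _ _ (j, i) ordered).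
  apply: le_trans; first exact: (@bigmin_le _ _ _ _ (true, x i)).
  by rewrite le_eqVlt; apply/orP; left; apply/eqP/eq_bigl => y; rewrite /= andbC.
- by move: ij; rewrite (val_inj eq_ij) eqxx.
Qed.

(* [E_k u (x) = E[u 1_{X_k = x_k}] / P(X_k = x_k)]; pulling [1_{X_k = x_k}] through
   [E_{-k}] (legal as [u] is [X_{-k}]-measurable) and subtracting its mean
   (legal as [E u = 0]) leaves a factor bounded by [delta_0]. *)
Lemma abs_condE_group_le k (u : Omega p -> R) x :
  0 < pmin P grp -> 0 < P x -> determined_by (~: Xg grp k) u -> Ex P u = 0 ->
  `|condE P (Xg grp k) u x| <= delta0 P grp / pmin P grp * Ex P (fun z => `|u z|).
Proof.
move=> pmin_gt0 hx u_det u_mean.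
set e := agree_ind R (Xg grp k) x; set D := agree_mass P (Xg grp k) x.
have D_ge : pmin P grp <= D by apply: agree_mass_ge_pmin.
have D_gt0 : 0 < D by apply: lt_le_trans D_ge.
have num_eq : agree_sum P (Xg grp k) u x
    = Ex P (fun z => u z * (condE P (~: Xg grp k) e z - D)).
  have -> : Ex P (fun z => u z * (condE P (~: Xg grp k) e z - D))
      = Ex P (fun z => u z * condE P (~: Xg grp k) e z) - D * Ex P u.
    by rewrite -ExZ -ExB; apply: eq_Ex => z; ring.
  by rewrite u_mean mulr0 subr0 Ex_mul_condE // agree_sum_Ex.
have num_le : `|agree_sum P (Xg grp k) u x| <= delta0 P grp * Ex P (fun z => `|u z|).
  rewrite num_eq -ExZ; apply: le_trans (abs_Ex_le P_ge0 _) _.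
  apply: ler_Ex_support => // z hz.
  rewrite normrM mulrC ler_wpM2r // /D -Ex_agree_ind.
  exact: agree_ind_dev.
rewrite condE_ratio normrM normfV (gtr0_norm D_gt0) ler_pdivrMr //.
apply: le_trans num_le _.
have ge1 : 1 <= D / pmin P grp by rewrite ler_pdivlMr // mul1r.
rewrite (_ : _ * D = delta0 P grp * Ex P (fun z => `|u z|) * (D / pmin P grp));
  last first.
  by field; rewrite gt_eqF.
by rewrite ler_peMr // mulr_ge0 ?delta0_ge0 ?Ex_ge0.
Qed.

Lemma Ex_sqr_condE_group_le k (u : Omega p -> R) :
  0 < pmin P grp -> determined_by (~: Xg grp k) u -> Ex P u = 0 ->
  Ex P (fun x => condE P (Xg grp k) u x ^+ 2)
  <= (delta0 P grp / pmin P grp) ^+ 2 * Ex P (fun x => u x ^+ 2).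
Proof.
move=> pmin_gt0 u_det u_mean.
rewrite -[leRHS](Ex_cst P_sum1); apply: ler_Ex_support => // x hx.
have bound := abs_condE_group_le pmin_gt0 hx u_det u_mean.
apply: (@le_trans _ _ ((delta0 P grp / pmin P grp * Ex P (fun z => `|u z|)) ^+ 2)).
  by rewrite -real_normK ?num_real // ler_sqr ?nnegrE // (le_trans (normr_ge0 _) bound).
by rewrite exprMn ler_wpM2l ?sqr_ge0 // Ex_abs_sqr_le.
Qed.

End OneHotGroups.

Theorem mainTheorem10 (R : realType) (p M : nat) (P : Omega p -> R)
  (grp : 'I_p -> 'I_M) (f : Omega p -> R) (ms : seq 'I_M) (m : 'I_M) :
  (forall x, 0 <= P x) -> \sum_(x : Omega p) P x = 1 ->
  (2 <= M)%N -> (forall k : 'I_M, exists j, grp j = k) ->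
  (forall k : 'I_M, (1 < #|Xg grp k|)%N ->
     Pr P (fun x => #|[set j in Xg grp k | x j]| == 1%N) = 1) ->
  Ex P f = 0 ->
  0 < pmin P grp ->
  m \notin ms ->
  `| Ex P (fun x => (condE P (Xg grp m) (fun y => f y - Rseq P grp f ms y) x) ^+ 2)
     - Var P (gm P grp f m) |
  <= 21%:R * delta0 P grp / (pmin P grp) ^+ 2 * Ex P (fun x => f x ^+ 2).
Proof.
move=> P_ge0 P_sum1 M_ge2 grp_surj one_hot Ef0 pmin_gt0 m_notin.
have inv := residual_inv_Rseq grp P_ge0 P_sum1 Ef0 m_notin.
have [res_sq _ _] := inv; have [u_det u_mean u_sq] := residual_gap_props P_ge0 Ef0 inv.
have F_ge0 : 0 <= Ex P (fun x => f x ^+ 2) by apply: Ex_sqr_ge0.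
have dq_ge0 : 0 <= delta0 P grp / pmin P grp.
  by rewrite divr_ge0 ?delta0_ge0 // ltW.
rewrite Var_mean0; last by rewrite Ex_condE // ExB Ex_condE // subrr.
apply: le_trans (abs_Ex_sqr_sub_le P_ge0 dq_ge0 F_ge0 _ _ _) _.
- under eq_Ex => x do rewrite (condE_residual_sub_gm grp f m P_ge0).
  apply: le_trans (Ex_sqr_condE_group_le P_ge0 P_sum1 M_ge2 grp_surj one_hot
                     pmin_gt0 u_det u_mean) _.
  by rewrite ler_wpM2l ?sqr_ge0.
- exact: le_trans (Ex_sqr_condE_le P_ge0 _ _) res_sq.
- exact: le_trans (Ex_sqr_condE_le P_ge0 _ _) (Ex_sqr_sub_condE_le P_ge0 _ _).
- by apply: mul4_le_mul21_div_sqr; rewrite ?delta0_ge0 ?pmin_le1.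
Qed.
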